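(* Let $C$ be the ideal of the Kauffman monoid $\mathcal{K}_3$ generated by $c$. Then $\mathcal{K}_3\setminus C=\{1,h_1,h_2,h_1h_2,h_2h_1\}$. Moreover, the Rees quotient $\mathcal{K}_3/C$ is isomorphic to the 6-element Brandt monoid $B_2^1$ via $h_1\mapsto a$, $h_2\mapsto b$. The involution induced on $\mathcal{K}_3/C$ by the reflection swaps $ab$ and $ba$ and fixes all other elements; consequently $\{ab,ba,0\}$ is an involution subsemigroup isomorphic to the twisted semilattice $TSL$. Finally, each Zimin word is an involutory isoterm relative to $\mathcal{K}_3$ regarded as an involution semigroup under reflection.
   Context: $\mathcal{K}_3$ is the monoid presented by generators $c,h_1,h_2$ and relations $h_1h_2h_1=h_1$, $h_2h_1h_2=h_2$, and $h_i^2=ch_i=h_ic$ for $i=1,2$. The reflection ${}^*$ is the unique involutory anti-automorphism of $\mathcal{K}_3$ fixing $c,h_1,h_2$. The Brandt monoid $B_2^1$ is the monoid with zero $\{1,a,b,ab,ba,0\}$ defined by $a^2=b^2=0$, $aba=a$, $bab=b$. The twisted semilattice $TSL$ is the involution semigroup $\{e,f,0\}$ with $e^2=e$, $f^2=f$, all other products equal to $0$, and $e^\star=f$, $f^\star=e$, $0^\star=0$. Zimin words are defined by $Z_1=x_1$ and $Z_{n+1}=Z_nx_{n+1}Z_n$. A word $v$ is an involutory isoterm relative to an involution semigroup $\mathcal{S}$ if the only involutory word $v'$ (an element of the free semigroup on $X\cup\{x^\star\mid x\in X\}$, with $(x_1\cdots x_m)^\star=x_m^\star\cdots x_1^\star$)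 such that $\mathcal{S}$ satisfies $v\approx v'$ is $v'=v$. *)

From mathcomp Require Import all_boot.
Set Implicit Arguments. Unset Strict Implicit. Unset Printing Implicit Defensive.

Inductive letter := Lc | Lh1 | Lh2.

Inductive krel : seq letter -> seq letter -> Prop :=
| kr_h1h2h1 : krel [:: Lh1; Lh2; Lh1] [:: Lh1]
| kr_h2h1h2 : krel [:: Lh2; Lh1; Lh2] [:: Lh2]
| kr_sq1 : krel [:: Lh1; Lh1] [:: Lc; Lh1]
| kr_sq2 : krel [:: Lh2; Lh2] [:: Lc; Lh2]
| kr_comm1 : krel [:: Lc; Lh1] [:: Lh1; Lc]
| kr_comm2 : krel [:: Lc; Lh2] [:: Lh2; Lc].

(** The monoid congruence on the free monoid generated by krel;
    K_3 is the quotient of seq letter by kequiv. *)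
Inductive kequiv : seq letter -> seq letter -> Prop :=
| keq_refl u : kequiv u u
| keq_sym u v : kequiv u v -> kequiv v u
| keq_trans u v w : kequiv u v -> kequiv v w -> kequiv u w
| keq_step p l r q : krel l r -> kequiv (p ++ l ++ q) (p ++ r ++ q).

Definition inC (u : seq letter) : Prop :=
  exists p q, kequiv u (p ++ Lc :: q).

(** The reflection on words: all generators are fixed, so it is reversal. *)
Definition refl_word (u : seq letter) : seq letter := rev u.

Inductive B21 := B1 | Ba | Bb | Bab | Bba | B0.

Definition bmul (x y : B21) : B21 :=
  match x, y with
  | B1, y => y
  | x, B1 => x
  | Ba, Bb => Bab
  | Ba, Bba => Ba
  | Bb, Ba => Bba
  | Bb, Bab => Bb
  | Bab, Ba => Ba
  | Bab, Bab => Bab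
  | Bba, Bb => Bb
  | Bba, Bba => Bba
  | _, _ => B0
  end.

Definition binv (x : B21) : B21 :=
  match x with Bab => Bba | Bba => Bab | x => x end.

Definition phiL (l : letter) : B21 :=
  match l with Lc => B0 | Lh1 => Ba | Lh2 => Bb end.
Definition phi (u : seq letter) : B21 := foldr (fun l acc => bmul (phiL l) acc) B1 u.

Inductive TSL := Te | Tf | T0.
Definition tmul (x y : TSL) : TSL :=
  match x, y with Te, Te => Te | Tf, Tf => Tf | _, _ => T0 end.
Definition tinv (x : TSL) : TSL :=
  match x with Te => Tf | Tf => Te | T0 => T0 end.

(** An involutory word: letters (i, false) = x_i and (i, true) = x_i^*. *)
Definition iword := seq (nat * bool).

Definition ieval (sigma : nat -> seq letter) (w : iword) : seq letter :=
  flatten (map (fun p => if p.2 then refl_word (sigma p.1) else sigma p.1) w).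

Definition K3_satisfies (v v' : iword) : Prop :=
  forall sigma : nat -> seq letter, kequiv (ieval sigma v) (ieval sigma v').

(** zimin k = Z_(k+1): Z_1 = x_1, Z_(n+1) = Z_n x_(n+1) Z_n. *)
Fixpoint zimin (k : nat) : iword :=
  match k with
  | 0 => [:: (1, false)]
  | k'.+1 => zimin k' ++ (k'.+2, false) :: zimin k'
  end.

Definition K3_inv_isoterm (v : iword) : Prop :=
  forall v' : iword, v' <> [::] -> K3_satisfies v v' -> v' = v.

From mathcomp Require Import all_boot.
Set Implicit Arguments. Unset Strict Implicit. Unset Printing Implicit Defensive.

(* The map phi : K_3 -> B_2^1 (c |-> 0, h1 |-> a, h2 |-> b) respects the
   defining relations, and turns reversal into the involution of B_2^1.
   Prepending a generator to one of the five words 1, h1, h2, h1h2, h2h1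
   either lands in C or gives again one of them, so every word is in C or
   equivalent to the canonical word of its phi-image; this describes the
   complement of C and shows that phi is injective on it.

   Since every element of B_2^1 lifts to K_3, identities of K_3 with
   reflection hold in B_2^1 with its involution, so it suffices to show that
   Zimin words are isoterms there.  Z_(n+1) is Z_n (with shifted variables)
   interleaved with a fresh variable x.  If v' satisfies the same identity,
   then x |-> 1 shows that v' with x erased is Z_n; x |-> ab (others 1)
   rules out x^* in v', since ab^* = ba; and x |-> a (others b) forces v'
   to alternate x with the other letters, starting and ending with x. *)

Lemma bmulA x y z : bmul x (bmul y z) = bmul (bmul x y) z.
Proof. by case: x; case: y; case: z. Qed.

Lemma bmul1r x : bmul x B1 = x.
Proof. by case: x. Qed.

Lemma binvM x y : binv (bmul x y) = bmul (binv y) (binv x).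
Proof. by case: x; case: y. Qed.

Lemma kequiv_cat a b u v : kequiv u v -> kequiv (a ++ u ++ b) (a ++ v ++ b).
Proof.
elim=> [w|w1 w2 _|w1 w2 w3 _ IH1 _ IH2|p l r q lr].
- exact: keq_refl.
- exact: keq_sym.
- exact: keq_trans IH1 IH2.
- by have := keq_step (a ++ p) (q ++ b) lr; rewrite -!catA.
Qed.

Lemma kequiv_cons l u v : kequiv u v -> kequiv (l :: u) (l :: v).
Proof. by move/(kequiv_cat [:: l] [::]); rewrite !cats0. Qed.

Lemma kequiv_krel l r : krel l r -> kequiv l r.
Proof. by move/(keq_step [::] [::]); rewrite !cats0. Qed.

Lemma phi_cat u v : phi (u ++ v) = bmul (phi u) (phi v).
Proof. by elim: u => [|l u IH] //=; rewrite IH bmulA. Qed.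

Lemma kequiv_phi u v : kequiv u v -> phi u = phi v.
Proof.
elim=> [w|w1 w2 _ ->|w1 w2 w3 _ -> _ ->|p l r q] //.
by case; rewrite !phi_cat.
Qed.

Lemma inC_phi u : inC u -> phi u = B0.
Proof.
case=> p [q /kequiv_phi ->].
by rewrite phi_cat /=; case: (phi p); case: (phi q).
Qed.

(* For z <> 0, [rep z] is the normal form of every word outside C with
   image z. *)
Definition rep (z : B21) : seq letter :=
  match z with
  | B1 => [::] | Ba => [:: Lh1] | Bb => [:: Lh2]
  | Bab => [:: Lh1; Lh2] | Bba => [:: Lh2; Lh1] | B0 => [:: Lc]
  end.

Lemma phi_rep z : phi (rep z) = z.
Proof. by case: z. Qed.

Lemma inC_rep0 : inC (rep B0).
Proof. by exists [::], [::]; apply: keq_refl. Qed.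

Lemma inC_cons l u : inC u -> inC (l :: u).
Proof. by case=> p [q E]; exists (l :: p), q; apply: kequiv_cons. Qed.

Lemma cons_rep l z :
  inC (l :: rep z) \/ kequiv (l :: rep z) (rep (bmul (phiL l) z)).
Proof.
have sq1 q : inC [:: Lh1, Lh1 & q].
  by exists [::], [:: Lh1 & q]; apply: (kequiv_cat [::] q (kequiv_krel kr_sq1)).
have sq2 q : inC [:: Lh2, Lh2 & q].
  by exists [::], [:: Lh2 & q]; apply: (kequiv_cat [::] q (kequiv_krel kr_sq2)).
case: l; first by left; exists [::], (rep z); apply: keq_refl.
- case: z; [right; apply: keq_refl|left; apply: sq1|right; apply: keq_refl
           |left; apply: sq1|right; apply: kequiv_krel kr_h1h2h1
           |left; apply: inC_cons inC_rep0].
- case: z; [right; apply: keq_refl|right; apply: keq_refl|left; apply: sq2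
           |right; apply: kequiv_krel kr_h2h1h2|left; apply: sq2
           |left; apply: inC_cons inC_rep0].
Qed.

Lemma inC_kequiv u v : kequiv u v -> inC v -> inC u.
Proof. by move=> E [p [q E']]; exists p, q; apply: keq_trans E E'. Qed.

Lemma inC_or_rep u : inC u \/ kequiv u (rep (phi u)).
Proof.
elim: u => [|l u [Cu|Eu]]; first by right; apply: keq_refl.
- by left; apply: inC_cons.
- have El := kequiv_cons l Eu.
  case: (cons_rep l (phi u)) => [C|E]; first by left; apply: inC_kequiv C.
  by right; apply: keq_trans El E.
Qed.

Lemma phi_eq0 u : phi u = B0 <-> inC u.
Proof.
split; last exact: inC_phi.
by case: (inC_or_rep u) => // E phi0; rewrite phi0 in E; apply: inC_kequiv inC_rep0.
Qed.

Lemma notinC_rep u : ~ inC u <-> phi u <> B0 /\ kequiv u (rep (phi u)).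
Proof.
split=> [nCu|[phi_u0 _] /inC_phi //].
by case: (inC_or_rep u) => // E; split=> // /phi_eq0.
Qed.

Lemma phi_eq u v : phi u = phi v <-> kequiv u v \/ (inC u /\ inC v).
Proof.
split=> [Euv|[/kequiv_phi //|[/phi_eq0 -> /phi_eq0 ->]] //].
have [Cu|Eu] := inC_or_rep u.
  by right; split=> //; apply/phi_eq0; rewrite -Euv; apply/phi_eq0.
have [Cv|Ev] := inC_or_rep v.
  by right; split=> //; apply/phi_eq0; rewrite Euv; apply/phi_eq0.
by left; rewrite Euv in Eu; apply: keq_trans Eu (keq_sym Ev).
Qed.

Lemma krel_rev l r : krel l r -> kequiv (rev l) (rev r).
Proof.
case; try by apply: keq_sym; apply: kequiv_krel; constructor.
- exact: kequiv_krel kr_h1h2h1.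
- exact: kequiv_krel kr_h2h1h2.
- exact: keq_trans (kequiv_krel kr_sq1) (kequiv_krel kr_comm1).
- exact: keq_trans (kequiv_krel kr_sq2) (kequiv_krel kr_comm2).
Qed.

Lemma kequiv_rev u v : kequiv u v -> kequiv (rev u) (rev v).
Proof.
elim=> [w|w1 w2 _|w1 w2 w3 _ IH1 _ IH2|p l r q /krel_rev E].
- exact: keq_refl.
- exact: keq_sym.
- exact: keq_trans IH1 IH2.
- by rewrite !rev_cat -!catA; apply: kequiv_cat.
Qed.

Lemma phi_rev u : phi (rev u) = binv (phi u).
Proof.
elim: u => [|l u IH] //=.
by rewrite rev_cons -cats1 phi_cat IH binvM /= bmul1r; case: l.
Qed.

Definition bval (tau : nat -> B21) (x : nat * bool) : B21 :=
  if x.2 then binv (tau x.1) else tau x.1.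

Definition beval (tau : nat -> B21) (w : iword) : B21 :=
  foldr (fun x acc => bmul (bval tau x) acc) B1 w.

Definition B21_satisfies (v v' : iword) : Prop :=
  forall tau, beval tau v = beval tau v'.

Definition B21_isoterm (v : iword) : Prop :=
  forall v', B21_satisfies v v' -> v' = v.

Lemma eq_in_beval (tau tau' : nat -> B21) (w : iword) :
  (forall x, x \in w -> tau x.1 = tau' x.1) -> beval tau w = beval tau' w.
Proof.
elim: w => [|x w IH] //= E.
by rewrite /bval E ?mem_head // IH // => y wy; rewrite E // in_cons wy orbT.
Qed.

Lemma phi_ieval sigma w : phi (ieval sigma w) = beval (fun i => phi (sigma i)) w.
Proof.
elim: w => [|[i [|]] w IH] //=; by rewrite phi_cat IH // /refl_word phi_rev.
Qed.

Lemma K3_satisfies_B21 v v' : K3_satisfies v v' -> B21_satisfies v v'.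
Proof.
move=> K3vv' tau; have := kequiv_phi (K3vv' (fun i => rep (tau i))).
by rewrite !phi_ieval !(@eq_in_beval _ tau) // => x _; rewrite phi_rep.
Qed.

Lemma beval_eq1 (tau : nat -> B21) (w : iword) :
  (forall i, tau i <> B1) -> beval tau w = B1 -> w = [::].
Proof.
case: w => [|[i b] w] //= /(_ i); rewrite /bval /=.
by case: b; case: (tau i); case: (beval tau w).
Qed.

Definition avoids (j : nat) (w : iword) : bool := all (fun x => x.1 != j) w.

Definition erase_var (j : nat) (w : iword) : iword := filter (fun x => x.1 != j) w.

Fixpoint interleave (x : nat * bool) (w : iword) : iword :=
  if w is y :: w' then x :: y :: interleave x w' else [:: x].

Lemma avoids_erase_var j w : avoids j (erase_var j w).
Proof. exact: filter_all. Qed.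

Lemma beval_erase_var (tau : nat -> B21) (j : nat) (w : iword) :
  tau j = B1 -> beval tau (erase_var j w) = beval tau w.
Proof.
move=> tau_j; elim: w => [|[i b] w IH] //=.
case: eqP => [->|_] /=; last by rewrite IH.
by rewrite /bval /= tau_j IH; case: b.
Qed.

Lemma erase_var_interleave j W :
  avoids j W -> erase_var j (interleave (j, false) W) = W.
Proof.
elim: W => [|[i b] W IH] /=; first by rewrite eqxx.
by case/andP=> ij jW; rewrite eqxx /= ij IH.
Qed.

(* [binv u = u] because the letters of W may be starred. *)
Lemma beval_interleave j t u W :
  avoids j W -> binv u = u -> bmul t (bmul u t) = t ->
  beval (fun i => if i == j then t else u) (interleave (j, false) W) = t.
Proof.
move=> + uK tut; elim: W => [|[i b] W IH] /=.
  by rewrite /bval /= eqxx bmul1r.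
case/andP=> ij /IH {}IH; rewrite IH /bval /= eqxx (negbTE ij).
by case: b; rewrite ?uK.
Qed.

Section Interleave.
Variable j : nat.

Let tau_ab i := if i == j then Bab else B1.
Let tau_a i := if i == j then Ba else Bb.

Lemma unstarred_of_beval_ab w :
  beval tau_ab w = B1 \/ beval tau_ab w = Bab ->
  all (fun x => (x.1 == j) ==> ~~ x.2) w.
Proof.
elim: w => [|[i b] w IH] //=; rewrite /bval /tau_ab /=.
by case: (i == j); case: b => /=; case: (beval _ w) IH => IH [] //= _;
  rewrite IH; auto.
Qed.

Lemma interleave_of_beval_a w : all (fun x => (x.1 == j) ==> ~~ x.2) w ->
  (beval tau_a w = Ba -> w = interleave (j, false) (erase_var j w)) /\
  (beval tau_a w = Bba ->
     exists2 x, x.1 != j & w = x :: interleave (j, false) (erase_var j (behead w))).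
Proof.
elim: w => [|[i b] w IH] //= /andP [ib /IH [IHa IHba]].
rewrite /bval /tau_a /=; case: eqP ib => [-> /=|/eqP ij _].
- case: b => [/negP[] //|_].
  split; last by case: (beval _ w).
  case E: (beval _ w) => // _.
  + by rewrite (beval_eq1 _ E) // => k; case: (k == j).
  + case: (IHba E) => x xj ->; rewrite /= (negbTE xj) erase_var_interleave //.
    exact: avoids_erase_var.
- split=> [|E]; first by case: b; case: (beval _ w).
  exists (i, b) => //.
  by rewrite -IHa //; move: E; case: b; case: (beval _ w).
Qed.

Lemma isoterm_interleave W :
  avoids j W -> B21_isoterm W -> B21_isoterm (interleave (j, false) W).
Proof.
move=> jW isoW v' sat.
have erase_v' : erase_var j v' = W.
  apply: isoW => tau; pose tau1 i := if i == j then B1 else tau i.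
  have tau1E w : avoids j w -> beval tau1 w = beval tau w.
    by move=> /allP jw; apply: eq_in_beval => -[i b] /jw /negbTE ij; rewrite /tau1 ij.
  have tau1j : tau1 j = B1 by rewrite /tau1 eqxx.
  rewrite -tau1E // -(erase_var_interleave jW) beval_erase_var // sat.
  by rewrite -(beval_erase_var _ tau1j) tau1E // avoids_erase_var.
have v'_ab := sat tau_ab; rewrite beval_interleave // in v'_ab.
have v'_a := sat tau_a; rewrite beval_interleave // in v'_a.
have unstarred := unstarred_of_beval_ab (or_intror (esym v'_ab)).
by rewrite ((interleave_of_beval_a unstarred).1 (esym v'_a)) erase_v'.
Qed.
End Interleave.

Lemma isoterm_nil : B21_isoterm [::].
Proof. by move=> v' /(_ (fun=> B0)) /esym /beval_eq1 ->. Qed.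

Definition shift (s : nat) (w : iword) : iword := map (fun x => (x.1 + s, x.2)) w.

Lemma interleave_cat x A y B :
  interleave x (A ++ y :: B) = interleave x A ++ y :: interleave x B.
Proof. by elim: A => [|a A IH] //=; rewrite IH. Qed.

Lemma shift_zimin_succ k s :
  shift s (zimin k.+1) = interleave (s.+1, false) (shift s.+1 (zimin k)).
Proof.
elim: k s => [|k IH] s //.
rewrite [zimin k.+2]/= /shift map_cat /= -!/(shift _ _) IH.
rewrite /shift map_cat /= -!/(shift _ _) interleave_cat.
by rewrite addnS addSn.
Qed.

Lemma zimin_pos k : all (fun x => 0 < x.1) (zimin k).
Proof. by elim: k => [|k IH] //=; rewrite all_cat /= IH. Qed.

Lemma avoids_shift_zimin k s : avoids s (shift s (zimin k)).
Proof.
rewrite /avoids all_map; apply: sub_all (zimin_pos k) => -[i b] /=.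
by rewrite -{2}[s]add0n eqn_add2r -lt0n.
Qed.

Lemma B21_isoterm_zimin k s : B21_isoterm (shift s (zimin k)).
Proof.
elim: k s => [|k IH] s.
  by apply: (isoterm_interleave (W := [::])) => //; apply: isoterm_nil.
rewrite shift_zimin_succ; apply: isoterm_interleave; last exact: IH.
exact: avoids_shift_zimin.
Qed.

Lemma shift0 w : shift 0 w = w.
Proof. by elim: w => [|[i b] w IH] //=; rewrite addn0 IH. Qed.

Lemma K3_inv_isoterm_zimin k : K3_inv_isoterm (zimin k).
Proof.
move=> v' _ /K3_satisfies_B21 sat.
by have := @B21_isoterm_zimin k 0; rewrite shift0; apply.
Qed.

Definition tsl_in_B21 (x : TSL) : B21 :=
  match x with Te => Bab | Tf => Bba | T0 => B0 end.

Theorem mainTheorem8 :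
  (forall u : seq letter,
      ~ inC u <->
      (kequiv u [::] \/ kequiv u [:: Lh1] \/ kequiv u [:: Lh2] \/
       kequiv u [:: Lh1; Lh2] \/ kequiv u [:: Lh2; Lh1])) /\
  (forall u v, phi (u ++ v) = bmul (phi u) (phi v)) /\
  (forall u, phi u = B0 <-> inC u) /\
  (forall u v, phi u = phi v <-> (kequiv u v \/ (inC u /\ inC v))) /\
  (forall z : B21, exists u, phi u = z) /\
  (forall u v, kequiv u v -> kequiv (refl_word u) (refl_word v)) /\
  (forall u, phi (refl_word u) = binv (phi u)) /\
  (exists psi : TSL -> B21,
      injective psi /\
      (forall x y, psi (tmul x y) = bmul (psi x) (psi y)) /\
      (forall x, psi (tinv x) = binv (psi x)) /\
      (forall z, (z = Bab \/ z = Bba \/ z = B0) <-> exists x, psi x = z)) /\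
  (forall k : nat, K3_inv_isoterm (zimin k)).
Proof.
split.
  move=> u; split=> [/notinC_rep [] | ].
  - by case: (phi u) => //= _ E; do ?[by left | right].
  - by case=> [|[|[|[|]]]] /kequiv_phi phi_u /inC_phi; rewrite phi_u.
split; first exact: phi_cat.
split; first exact: phi_eq0.
split; first exact: phi_eq.
split; first by move=> z; exists (rep z); apply: phi_rep.
split; first exact: kequiv_rev.
split; first exact: phi_rev.
split; last exact: K3_inv_isoterm_zimin.
exists tsl_in_B21; split; first by do 2!case.
split; first by do 2!case.
split; first by case.
move=> z; split=> [[|[|]] ->|[[] <-]]; by [exists Te|exists Tf|exists T0|auto].
Qed.
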